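(* There exists a function $\phi:\mathbb{R}\to\mathbb{R}$ generated by a $\sigma$-activated network with width $3$ and depth $2$ such that $\phi(x)=x^2$ for all $x\in[-1,1]$.
   Context: Let $\sigma_1:\mathbb{R}\to\mathbb{R}$ be the continuous triangular-wave function of period $2$: $\sigma_1(x)=|x|$ for $x\in[-1,1]$, $\sigma_1(x+2)=\sigma_1(x)$. The activation is $\sigma(x)=\sigma_1(x)$ for $x\ge0$ and $\sigma(x)=x/(|x|+1)$ for $x<0$, applied entrywise. A function generated by a $\sigma$-activated network with one input, width $N$ and depth $L$ is a function of the form $\mathcal{L}_{\ell}\circ\sigma\circ\mathcal{L}_{\ell-1}\circ\cdots\circ\sigma\circ\mathcal{L}_0$ with $\ell\le L$ hidden layers, affine maps $\mathcal{L}_i$, $\mathcal{L}_0$ with domain $\mathbb{R}$, $\mathcal{L}_\ell$ with codomain $\mathbb{R}$, and at most $N$ neurons in each hidden layer. *)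

From Stdlib Require Import Reals.
From mathcomp Require Import all_boot all_order all_algebra.
From mathcomp Require Import Rstruct.

Set Implicit Arguments. Unset Strict Implicit. Unset Printing Implicit Defensive.

Local Open Scope R_scope.

(* Triangular wave of period 2: sigma1 x = |x - 2k| where k = floor((x+1)/2),
   so sigma1 x = |x| on [-1,1] and sigma1 (x+2) = sigma1 x.
   Int_part is the floor function of Stdlib. *)
Definition sigma1 (x : R) : R :=
  Rabs (x - 2 * IZR (Int_part ((x + 1) / 2))).

Definition sigma (x : R) : R :=
  if Rle_dec 0 x then sigma1 x else x / (Rabs x + 1).

(* hidden N k n h : h : R -> R^n is the output of the k-th hidden layer (after
   activation) of a one-input sigma-network whose hidden layers all have at most
   N neurons, the last one having exactly n neurons. *)
Inductive hidden (N : nat) : nat -> forall n : nat, (R -> 'I_n -> R) -> Prop :=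
| hidden1 (n : nat) (A b : 'I_n -> R) :
    (n <= N)%N -> hidden N 1 (fun x i => sigma (A i * x + b i))
| hiddenS (k n m : nat) (h : R -> 'I_m -> R) (W : 'I_n -> 'I_m -> R) (b : 'I_n -> R) :
    (n <= N)%N -> hidden N k h ->
    hidden N k.+1 (fun x i => sigma ((\sum_(j < m) W i j * h x j)%R + b i)).

(* f is generated by a sigma-activated network with one input, width N, depth L:
   l <= L hidden layers (l = 0 means f is affine), then an affine output map. *)
Definition generated (N L : nat) (f : R -> R) : Prop :=
  (exists a c : R, forall x, f x = a * x + c) \/
  (exists (k n : nat) (h : R -> 'I_n -> R) (w : 'I_n -> R) (c : R),
      (1 <= k <= L)%N /\ hidden N k h /\
      forall x, f x = (\sum_(i < n) w i * h x i)%R + c).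

(* On (-oo, 0] the activation is the Moebius map u |-> u / (1 - u) = 1 / (1 - u) - 1,
   so a layer whose inputs stay nonpositive computes reciprocals.  The first layer
   turns x into 1 / (3 - x) + 1 / (3 + x) = 6 / (9 - x^2), an affine map sends this
   to 1 - 9 / (9 - x^2) <= 0, and the reciprocal taken by the second layer yields
   (9 - x^2) / 9 - 1 = - x^2 / 9. *)
From Stdlib Require Import Reals Lra.
From mathcomp Require Import all_boot all_order all_algebra.
From mathcomp Require Import Rstruct.
Local Open Scope R_scope.

Lemma sigma1_0 : sigma1 0 = 0.
Proof.
have half_floor : Int_part ((0 + 1) / 2) = Z0.
  by symmetry; apply: Int_part_spec; simpl; lra.
by rewrite /sigma1 half_floor Rmult_0_r Rminus_0_r Rabs_R0.
Qed.

Lemma sigma_nonpos u : u <= 0 -> sigma u = 1 / (1 - u) - 1.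
Proof.
move=> u_le0; rewrite /sigma.
case: (Rle_dec 0 u) => [u_ge0 | u_lt0] /=.
- have u0 : u = 0 by lra.
  by rewrite u0 sigma1_0; field.
- rewrite Rabs_left; last by lra.
  by field; lra.
Qed.

Lemma sigma_one_sub_div a t : 0 < t <= a -> sigma (1 - a / t) = t / a - 1.
Proof.
move=> [t_gt0 t_le_a].
have a_div_t_ge1 : 1 <= a / t.
  by apply/(Rmult_le_reg_r t) => //; rewrite Rmult_1_l /Rdiv Rmult_assoc Rinv_l; lra.
rewrite sigma_nonpos; last by lra.
by field; lra.
Qed.

Lemma sigma_shift_pair x :
  -2 <= x <= 2 -> sigma (x - 2) + sigma (- x - 2) = 6 / (9 - x ^ 2) - 2.
Proof.
move=> x_bounds.
rewrite !sigma_nonpos; try lra.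
by field; repeat split; nra.
Qed.

Definition two_layer_net (m n : nat) (A b : 'I_m -> R) (W : 'I_n -> 'I_m -> R)
    (b' w : 'I_n -> R) (c : R) (x : R) : R :=
  (\sum_(i < n) w i * sigma (\sum_(j < m) W i j * sigma (A j * x + b j) + b' i))%R + c.

Lemma two_layer_net_generated N m n A b W b' w c :
  (m <= N)%N -> (n <= N)%N -> generated N 2 (@two_layer_net m n A b W b' w c).
Proof.
move=> m_le_N n_le_N; right.
exists 2%N, n; eexists; exists w, c; split=> //; split=> //.
exact: (hiddenS W b' n_le_N (hidden1 A b m_le_N)).
Qed.

Definition square_net : R -> R :=
  @two_layer_net 2 1 (fun j => if val j == 0%N then 1 else -1) (fun=> -2)
    (fun _ _ => -3 / 2) (fun=> -2) (fun=> -9) 0.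

Lemma square_netE x : -1 <= x <= 1 -> square_net x = x ^ 2.
Proof.
move=> x_bounds.
rewrite /square_net /two_layer_net !big_ord_recr !big_ord0 /= !GRing.add0r.
rewrite -!RplusE -!RmultE.
rewrite (_ : 1 * x + -2 = x - 2); last by ring.
rewrite (_ : -1 * x + -2 = - x - 2); last by ring.
rewrite -Rmult_plus_distr_l sigma_shift_pair; last by lra.
rewrite (_ : -3 / 2 * (6 / (9 - x ^ 2) - 2) + -2 = 1 - 9 / (9 - x ^ 2)); last first.
  by field; nra.
rewrite sigma_one_sub_div; last by nra.
by field.
Qed.

Theorem lemma17 :
  exists phi : R -> R, generated 3 2 phi /\
    forall x : R, -1 <= x <= 1 -> phi x = x ^ 2.
Proof.
exists square_net; split; first exact: two_layer_net_generated.
exact: square_netE.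
Qed.
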